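(* (a) For every threshold function $f$ it holds that $NN(f)=2$. (b) If $n$ is odd then $BNN(MAJ_n)=2$, and if $n$ is even then $BNN(MAJ_n)\le \frac n2+2$. (c) $BNN\left(TH_n^{\lfloor n/3\rfloor}\right)=2^{\Omega(n)}$.
   Context: For a Boolean function $f:\{0,1\}^n\to\{0,1\}$, points $a$ with $f(a)=1$ are positive and those with $f(a)=0$ negative. A nearest neighbor representation of $f$ is a pair of disjoint sets $(P,N)$ of points of $\mathbb R^n$ such that for every $a\in\{0,1\}^n$: if $a$ is positive, there is $b\in P$ with $d(a,b)<d(a,c)$ for all $c\in N$; if $a$ is negative, there is $b\in N$ with $d(a,b)<d(a,c)$ for all $c\in P$ ($d$ = Euclidean distance). Its size is $|P\cup N|$. $NN(f)$ is the minimum size of a nearest neighbor representation of $f$; $BNN(f)$ is the minimum size of one with $P\cup N\subseteq\{0,1\}^n$. A Boolean function $f$ is a threshold function if there are $w_1,\dots,w_n,t\in\mathbb R$ with $f(x)=1$ iff $w_1x_1+\dots+w_nx_n\ge t$ for all $x\in\{0,1\}^n$. $TH_n^t$ denotes the $n$-variable function with $TH_n^t(x)=1$ iff $x_1+\dots+x_n\ge t$, and $MAJ_n=TH_n^{n/2}$. In (c), $n\to\infty$. *)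

From HB Require Import structures.
From mathcomp Require Import all_boot all_order all_algebra.
From mathcomp Require Import reals exp.
Set Implicit Arguments. Unset Strict Implicit. Unset Printing Implicit Defensive.
Import Order.TTheory GRing.Theory Num.Theory.
Local Open Scope ring_scope.

Definition cube (n : nat) := {ffun 'I_n -> bool}.

Definition boolfun (n : nat) := cube n -> bool.

Definition point (R : realType) (n : nat) := 'rV[R]_n.

Definition embed (R : realType) (n : nat) (a : cube n) : point R n :=
  \row_i (a i)%:R.

Definition dist (R : realType) (n : nat) (x y : point R n) : R :=
  Num.sqrt (\sum_i (x 0 i - y 0 i) ^+ 2).

Definition is_nn_rep (R : realType) (n : nat) (f : boolfun n)
    (P N : seq (point R n)) : Prop :=
  [/\ uniq P && uniq N, P != [::], N != [::],
      (forall x, x \in P -> x \notin N) &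
      forall a : cube n,
        if f a then
          exists2 b, b \in P & forall c, c \in N -> dist (embed R a) b < dist (embed R a) c
        else
          exists2 b, b \in N & forall c, c \in P -> dist (embed R a) b < dist (embed R a) c ].

(* Size |P u N| (= |P| + |N| since P, N are disjoint). *)
Definition rep_size (R : realType) (n : nat) (P N : seq (point R n)) : nat :=
  size P + size N.

Definition is_bnn_rep (R : realType) (n : nat) (f : boolfun n)
    (P N : seq (point R n)) : Prop :=
  is_nn_rep f P N /\
  forall x, x \in P ++ N -> exists a : cube n, x = embed R a.

Definition NN_eq (R : realType) (n : nat) (f : boolfun n) (k : nat) : Prop :=
  (exists P N : seq (point R n), is_nn_rep f P N /\ rep_size P N = k) /\
  forall P N : seq (point R n), is_nn_rep f P N -> (k <= rep_size P N)%N.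

Definition BNN_eq (R : realType) (n : nat) (f : boolfun n) (k : nat) : Prop :=
  (exists P N : seq (point R n), is_bnn_rep f P N /\ rep_size P N = k) /\
  forall P N : seq (point R n), is_bnn_rep f P N -> (k <= rep_size P N)%N.

Definition BNN_le (R : realType) (n : nat) (f : boolfun n) (k : nat) : Prop :=
  exists P N : seq (point R n), is_bnn_rep f P N /\ (rep_size P N <= k)%N.

Definition is_threshold (R : realType) (n : nat) (f : boolfun n) : Prop :=
  exists (w : 'I_n -> R) (t : R),
    forall x : cube n, f x = (t <= \sum_i w i * (x i)%:R).

Definition TH (n t : nat) : boolfun n := fun x => (t <= \sum_i (x i : nat))%N.
Definition MAJ (n : nat) : boolfun n := fun x => (n <= 2 * \sum_i (x i : nat))%N.

(* (a) A threshold function is strictly separated by a hyperplane <x, v> = s with v <> 0;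
   the points p + v and p - v with <p, v> = s are mirror images in that hyperplane, so they
   form a nearest neighbor representation.
   (b) For odd n the all-ones and all-zeros vectors represent MAJ_n.  For even n the all-ones
   vector is replaced by the n/2 + 1 vectors that have a single zero, placed among the first
   n/2 + 1 coordinates.
   (c) On the cube, Euclidean distance is the square root of Hamming distance.  In a Boolean
   representation of TH_n^k, every point on a Hamming geodesic from a point to its nearest
   representative gets the same label; hence every weight-k point lies below a positive
   representative of weight < 2k.  Such a representative lies above at most C(2k-1, k) of the
   C(n, k) weight-k points, and for k = n/3 the ratio C(n, k) / C(2k-1, k) is at least
   (3/2)^k >= 2^(k/2). *)

From HB Require Import structures.
From mathcomp Require Import all_boot all_order all_algebra.
From mathcomp Require Import reals exp.
From mathcomp Require Import zify ring lra.
Import Order.TTheory GRing.Theory Num.Theory.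
Set Implicit Arguments. Unset Strict Implicit. Unset Printing Implicit Defensive.
Local Open Scope ring_scope.

Section HammingCube.

Variable n : nat.
Implicit Types a b c p q x y z : cube n.

Definition ham a b : nat := (\sum_i (a i != b i))%N.
Definition wt a : nat := (\sum_i a i)%N.
Definition cube_le a b := [forall i, a i ==> b i].
Definition cubeI a b : cube n := [ffun i => a i && b i].
Definition cubeU a b : cube n := [ffun i => a i || b i].
Definition zeros : cube n := [ffun=> false].
Definition ones : cube n := [ffun=> true].
Definition allbut (j : 'I_n) : cube n := [ffun i => i != j].

Lemma ham_sym a b : ham a b = ham b a.
Proof. by apply: eq_bigr => i _; rewrite eq_sym. Qed.

Lemma ham_triangle a b c : (ham a c <= ham a b + ham b c)%N.
Proof.
rewrite /ham -big_split; apply: leq_sum => i _.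
by case: (a i); case: (b i); case: (c i).
Qed.

Lemma ham_eq0 a b : (ham a b == 0%N) = (a == b).
Proof.
rewrite sum_nat_eq0; apply/forallP/eqP => [h | ->]; last by move=> i; rewrite eqxx.
by apply/ffunP => i; move/implyP: (h i) => /(_ isT); rewrite eqb0 negbK => /eqP.
Qed.

Lemma ham_cubeI a b : ham a b = (ham a (cubeI a b) + ham (cubeI a b) b)%N.
Proof.
rewrite /ham -big_split; apply: eq_bigr => i _; rewrite ffunE.
by case: (a i); case: (b i).
Qed.

Lemma ham_cubeU a b : ham a b = (ham a (cubeU a b) + ham (cubeU a b) b)%N.
Proof.
rewrite /ham -big_split; apply: eq_bigr => i _; rewrite ffunE.
by case: (a i); case: (b i).
Qed.

Lemma cube_leP a b : reflect (forall i, a i -> b i) (cube_le a b).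
Proof. by apply: (iffP forallP) => le_ab i; [apply/implyP | apply/implyP/le_ab]. Qed.

Lemma cube_le_trans b a c : cube_le a b -> cube_le b c -> cube_le a c.
Proof. by move=> /cube_leP le_ab /cube_leP le_bc; apply/cube_leP => i /le_ab /le_bc. Qed.

Lemma cubeI_lel a b : cube_le (cubeI a b) a.
Proof. by apply/cube_leP => i; rewrite ffunE => /andP[]. Qed.

Lemma cubeI_ler a b : cube_le (cubeI a b) b.
Proof. by apply/cube_leP => i; rewrite ffunE => /andP[]. Qed.

Lemma cubeU_lel a b : cube_le a (cubeU a b).
Proof. by apply/cube_leP => i ai; rewrite ffunE ai. Qed.

Lemma cubeU_ler a b : cube_le b (cubeU a b).
Proof. by apply/cube_leP => i bi; rewrite ffunE bi orbT. Qed.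

Lemma ham_le a b : cube_le a b -> (ham a b + wt a)%N = wt b.
Proof.
move/cube_leP=> le_ab; rewrite /ham /wt -big_split; apply: eq_bigr => i _.
by move: (le_ab i); case: (a i); case: (b i) => // ->.
Qed.

Lemma wt_card a : wt a = #|[set i | a i]|.
Proof. by rewrite -sum1dep_card [RHS]big_mkcond; apply: eq_bigr => i _; case: (a i). Qed.

Lemma ham_zeros a : ham a zeros = wt a.
Proof. by apply: eq_bigr => i _; rewrite ffunE; case: (a i). Qed.

Lemma ham_ones a : (ham a ones + wt a)%N = n.
Proof.
rewrite /ham /wt -big_split -[n in RHS]card_ord -sum1_card; apply: eq_bigr => i _.
by rewrite ffunE; case: (a i).
Qed.

Lemma ham_allbut a j : (ham a (allbut j) + wt a)%N = (n.-1 + 2 * a j)%N.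
Proof.
rewrite /ham /wt -big_split (bigD1 j) //= ffunE eqxx.
rewrite (eq_bigr (fun=> 1%N)) => [|i ij]; last by rewrite ffunE ij; case: (a i).
rewrite sum1dep_card (eq_card (B := predC1 j)) => [|i]; last by rewrite inE.
by rewrite cardC1 card_ord; case: (a j) => /=; lia.
Qed.

Lemma allbut_inj : injective allbut.
Proof. by move=> j1 j2 /ffunP/(_ j1); rewrite !ffunE eqxx => /esym/negbFE/eqP. Qed.

Lemma wt_cubeI_allbut a j : a j -> (wt (cubeI a (allbut j))).+1 = wt a.
Proof.
move=> aj; rewrite -(ham_le (cubeI_lel a (allbut j))) ham_sym addnC -addn1.
congr (_ + _)%N; rewrite /ham (bigD1 j) //= big1 => [|i ij]; rewrite !ffunE ?eqxx ?aj //.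
by rewrite ij andbT eqxx.
Qed.

Lemma wt_prefix_le k a : (k <= n)%N -> (forall j : 'I_n, (j < k)%N -> a j) -> (k <= wt a)%N.
Proof.
move=> le_kn prefix_a; rewrite wt_card -[k in (k <= _)%N]card_ord.
have widen_inj : injective (widen_ord le_kn).
  by move=> j1 j2 /(congr1 val) eq_j; apply: val_inj.
rewrite -(card_imset _ widen_inj); apply: subset_leq_card.
apply/subsetP => _ /imsetP[j _ ->]; rewrite inE.
exact: (prefix_a (widen_ord le_kn j) (ltn_ord j)).
Qed.

Lemma allbut_neq_zeros j : (1 < n)%N -> allbut j != zeros.
Proof.
move=> n_gt1; apply/eqP => eq_j; have := ham_allbut zeros j.
move: (ham_eq0 zeros zeros); rewrite eqxx eq_j -[wt _]ham_zeros ffunE => /eqP ->; lia.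
Qed.

Definition allbut_prefix k (le_kn : (k <= n)%N) : seq (cube n) :=
  [seq allbut (widen_ord le_kn j) | j <- enum 'I_k].

Lemma size_allbut_prefix k (le_kn : (k <= n)%N) : size (allbut_prefix le_kn) = k.
Proof. by rewrite size_map size_enum_ord. Qed.

Lemma allbut_prefix_uniq k (le_kn : (k <= n)%N) : uniq (allbut_prefix le_kn).
Proof.
rewrite map_inj_uniq ?enum_uniq // => j1 j2 /allbut_inj /(congr1 val) eq_j.
exact: val_inj.
Qed.

Lemma mem_allbut_prefix k (le_kn : (k <= n)%N) (j : 'I_n) :
  (j < k)%N -> allbut j \in allbut_prefix le_kn.
Proof.
by move=> lt_jk; apply/mapP; exists (Ordinal lt_jk); rewrite ?mem_enum.
Qed.

Definition nearer (A B : seq (cube n)) a p :=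
  p \in A /\ forall q, q \in B -> (ham a p < ham a q)%N.

Definition ham_rep (f : boolfun n) (A B : seq (cube n)) :=
  forall a, if f a then exists p, nearer A B a p else exists q, nearer B A a q.

Lemma ham_rep_negb f A B : ham_rep f A B -> ham_rep (fun a => ~~ f a) B A.
Proof. by move=> rep a; have := rep a; case: (f a). Qed.

(* Otherwise a representative of [y] with the opposite label would beat [p] at [x]. *)
Lemma ham_rep_geodesic f A B x y p :
  ham_rep f A B -> nearer A B x p -> ham x p = (ham x y + ham y p)%N -> f y.
Proof.
move=> rep [Ap near_p] geo; have := rep y; case: (f y) => // -[q [Bq near_q]].
have := near_p q Bq; have := near_q p Ap; have := ham_triangle x y q; lia.
Qed.

End HammingCube.

Lemma card_bigcup_le (I T : finType) (P : pred I) (F : I -> {set T}) :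
  (#|\bigcup_(i | P i) F i| <= \sum_(i | P i) #|F i|)%N.
Proof.
apply: (big_ind2 (fun (U : {set T}) m => #|U| <= m)%N) => [|U1 m1 U2 m2 le1 le2 //|//].
  by rewrite cards0.
exact: leq_trans (leq_card_setU U1 U2).1 (leq_add le1 le2).
Qed.

Lemma leq_ffact_scale a b m n k :
  (b <= a)%N -> (a * m <= b * n)%N -> (a ^ k * m ^_ k <= b ^ k * n ^_ k)%N.
Proof.
move=> le_ba; elim: k m n => [//|k IH] m n le_mn.
rewrite !ffactnS !expnS.
have le_mn1 : (a * m.-1 <= b * n.-1)%N by case: m le_mn => [|m]; case: n => [|n] /=; nia.
have := leq_mul le_mn (IH _ _ le_mn1).
by rewrite [X in (X <= _)%N]mulnACA [X in (_ <= X -> _)%N]mulnACA.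
Qed.

Lemma leq_bin_scale a b m n k :
  (b <= a)%N -> (a * m <= b * n)%N -> (a ^ k * 'C(m, k) <= b ^ k * 'C(n, k))%N.
Proof.
move=> le_ba le_mn; rewrite -(leq_pmul2r (fact_gt0 k)) -!mulnA !bin_ffact.
exact: leq_ffact_scale.
Qed.

Lemma expn_three_halves k : (2 ^ (k + k %/ 2) <= 3 ^ k)%N.
Proof.
elim/ltn_ind: k => -[|[|k]] // IH.
have -> : (k.+2 + k.+2 %/ 2 = k + k %/ 2 + 3)%N by lia.
rewrite expnD (expnSr 3 k.+1) (expnSr 3 k) -mulnA.
by apply: leq_mul; [apply: IH; lia |].
Qed.

Section ThresholdRepresentation.

Variables (n k : nat) (A B : seq (cube n)).
Hypothesis rep : ham_rep (TH k) A B.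

Lemma le_nearer_TH a p : wt a = k -> nearer A B a p -> cube_le a p.
Proof.
move=> wa near_p.
have : TH k (cubeI a p) := ham_rep_geodesic rep near_p (ham_cubeI a p).
rewrite /TH -/(wt _) => le_k.
have /eqP : ham (cubeI a p) a = 0%N by have := ham_le (cubeI_lel a p); lia.
rewrite ham_eq0 => /eqP meet_a.
by rewrite -meet_a cubeI_ler.
Qed.

Lemma nearer_TH_le y q : (wt y).+1 = k -> nearer B A y q -> cube_le q y.
Proof.
move=> wy near_q.
have : ~~ TH k (cubeU y q) := ham_rep_geodesic (ham_rep_negb rep) near_q (ham_cubeU y q).
rewrite /TH -/(wt _) -ltnNge => lt_k.
have /eqP : ham y (cubeU y q) = 0%N by have := ham_le (cubeU_lel y q); lia.
rewrite ham_eq0 => /eqP join_y.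
by rewrite [y in cube_le _ y]join_y cubeU_ler.
Qed.

(* The nearest negative representative of [a] minus one coordinate lies below [a], hence within
   distance [k] of [a]. *)
Lemma TH_light_rep_above a :
  (0 < k)%N -> wt a = k -> exists p, [/\ p \in A, cube_le a p & (wt p < 2 * k)%N].
Proof.
move=> k_gt0 wa.
have [p near_p] : exists p, nearer A B a p by have := rep a; rewrite /TH -/(wt a) wa leqnn.
have le_ap := le_nearer_TH wa near_p.
have /set0Pn[i] : [set i | a i] != set0 by rewrite -card_gt0 -wt_card wa.
rewrite inE => ai; set y := cubeI a (allbut i).
have wy : (wt y).+1 = k by rewrite -wa wt_cubeI_allbut.
have [q near_q] : exists q, nearer B A y q by have := rep y; rewrite /TH -/(wt y) -wy ltnn.
have le_qa : cube_le q a := cube_le_trans (nearer_TH_le wy near_q) (cubeI_lel a (allbut i)).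
have ham_aq := ham_le le_qa; rewrite ham_sym in ham_aq.
exists p; split=> //; first by case: near_p.
by have := near_p.2 q near_q.1; have := ham_le le_ap; lia.
Qed.

Lemma bin_le_card_light_reps : (0 < k)%N -> ('C(n, k) <= #|A| * 'C((2 * k).-1, k))%N.
Proof.
move=> k_gt0.
pose draws p := if (wt p < 2 * k)%N
  then [set D : {set 'I_n} | (D \subset [set i | p i]) && (#|D| == k)] else set0.
have cover : [set D : {set 'I_n} | #|D| == k] \subset \bigcup_(p in A) draws p.
  apply/subsetP => D; rewrite inE => /eqP card_D.
  pose a : cube n := [ffun i => i \in D].
  have wa : wt a = k by rewrite wt_card -card_D; apply: eq_card => i; rewrite inE ffunE.
  have [p [Ap le_ap wp]] := TH_light_rep_above k_gt0 wa.
  apply/bigcupP; exists p; rewrite // /draws wp inE card_D eqxx andbT.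
  by apply/subsetP => i iD; rewrite inE; apply: (cube_leP _ _ le_ap); rewrite ffunE.
rewrite -[n in 'C(n, _)]card_ord -card_draws -sum_nat_const.
apply: leq_trans (subset_leq_card cover) _; apply: leq_trans (card_bigcup_le _ _) _.
apply: leq_sum => p _; rewrite /draws; case: ifP => wp; last by rewrite cards0.
by rewrite cards_draws -wt_card; apply: leq_bin2l; lia.
Qed.

Lemma expn_half_le_card : (0 < k)%N -> (3 * k <= n)%N -> (2 ^ (k %/ 2) <= #|A|)%N.
Proof.
move=> k_gt0 le_3k.
have bin_gt0 : (0 < 'C((2 * k).-1, k))%N by rewrite bin_gt0; lia.
have scale := @leq_bin_scale 3 2 (2 * k).-1 n k isT ltac:(lia).
rewrite -(leq_pmul2l (expn_gt0 2 k)) -expnD; apply: leq_trans (expn_three_halves k) _.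
rewrite -(leq_pmul2r bin_gt0) -mulnA; apply: leq_trans scale _.
by rewrite leq_mul2l bin_le_card_light_reps ?orbT.
Qed.

End ThresholdRepresentation.

Section EuclideanCube.

Variables (R : realType) (n : nat).
Implicit Types (x y z p v : point R n) (a b c : cube n).

Definition dot x y := \sum_i x 0 i * y 0 i.

Lemma dist_ltE x y z :
  (dist x y < dist x z) = (\sum_i (x 0 i - y 0 i) ^+ 2 < \sum_i (x 0 i - z 0 i) ^+ 2).
Proof.
by rewrite /dist !ltNge ler_sqrt // sumr_ge0 // => i _; apply: sqr_ge0.
Qed.

Lemma dist_embed_lt a b c :
  (dist (embed R a) (embed R b) < dist (embed R a) (embed R c)) = (ham a b < ham a c)%N.
Proof.
have sqdist d : \sum_i (embed R a 0 i - embed R d 0 i) ^+ 2 = (ham a d)%:R.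
  rewrite /ham natr_sum; apply: eq_bigr => i _; rewrite !mxE.
  by case: (a i); case: (d i); rewrite ?subrr ?expr0n ?subr0 ?sub0r ?sqrrN ?expr1n.
by rewrite dist_ltE !sqdist ltr_nat.
Qed.

Lemma embed_inj : injective (@embed R n).
Proof.
move=> a b /matrixP eq_ab; apply/ffunP => i; have /eqP := eq_ab 0 i.
by rewrite !mxE eqr_nat; case: (a i); case: (b i).
Qed.

Lemma dot_self_gt0 v : v != 0 -> 0 < dot v v.
Proof.
move=> v_neq0; rewrite lt0r sumr_ge0 ?andbT => [|i _]; last exact: sqr_ge0.
apply: contra v_neq0 => /eqP sum0; have v0 := psumr_eq0P (fun i _ => sqr_ge0 (v 0 i)) sum0.
by apply/eqP/matrixP => i j; rewrite !mxE ord1; apply/eqP; rewrite -sqrf_eq0 v0.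
Qed.

(* Polarization: the bisector of [p + v] and [p - v] is the hyperplane [dot x v = dot p v]. *)
Lemma sqdist_add_sub x p v :
  \sum_i (x 0 i - (p + v) 0 i) ^+ 2
    = \sum_i (x 0 i - (p - v) 0 i) ^+ 2 - 4 * dot x v + 4 * dot p v.
Proof.
rewrite /dot !mulr_sumr -sumrN -!big_split; apply: eq_bigr => i _ /=.
by rewrite !mxE; ring.
Qed.

Lemma halfspace_nn_rep (f : boolfun n) v s :
  v != 0 -> (forall a, if f a then s < dot (embed R a) v else dot (embed R a) v < s) ->
  is_nn_rep f [:: (s / dot v v) *: v + v] [:: (s / dot v v) *: v - v].
Proof.
move=> v_neq0 f_half; set p := (s / dot v v) *: v.
have dot_pv : dot p v = s.
  rewrite -[s](divfK (lt0r_neq0 (dot_self_gt0 v_neq0))) {2}/dot mulr_sumr.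
  by apply: eq_bigr => i _; rewrite !mxE mulrA.
have dist_pv x : (dist x (p + v) < dist x (p - v)) = (s < dot x v).
  by rewrite dist_ltE sqdist_add_sub dot_pv; apply/idP/idP => ?; lra.
have dist_vp x : (dist x (p - v) < dist x (p + v)) = (dot x v < s).
  by rewrite dist_ltE [X in _ < X]sqdist_add_sub dot_pv; apply/idP/idP => ?; lra.
split => //.
- move=> x; rewrite !inE => /eqP ->; apply: contra v_neq0 => /eqP /addrI /eqP.
  by rewrite -subr_eq0 opprK -mulr2n -scaler_nat scaler_eq0 pnatr_eq0.
- move=> a; have := f_half a; case: (f a) => side.
    by exists (p + v); rewrite ?inE // => c; rewrite inE => /eqP ->; rewrite dist_pv.
  by exists (p - v); rewrite ?inE // => c; rewrite inE => /eqP ->; rewrite dist_vp.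
Qed.

End EuclideanCube.

Lemma nn_rep_size_ge2 (R : realType) n (f : boolfun n) (P N : seq (point R n)) :
  is_nn_rep f P N -> (2 <= rep_size P N)%N.
Proof.
case=> _ P0 N0 _ _; move: P0 N0; rewrite /rep_size -!size_eq0 -!lt0n.
exact: leq_add.
Qed.

Lemma strict_threshold (R : realFieldType) (T : finType) (g : T -> R) t :
  exists s, forall x, if t <= g x then s < g x else g x < s.
Proof.
pose M := \big[Num.max/(t - 1)]_(x | g x < t) g x.
have lt_Mt : M < t.
  by rewrite /M; elim/big_ind: _ => // [|y z]; [lra | rewrite gt_max => -> ->].
have le_M x : g x < t -> g x <= M by move=> gx_t; rewrite /M (bigD1 x) //= le_max lexx.
clearbody M; exists ((M + t) / 2) => x; case: (leP t (g x)) => [le_tg | /le_M le_gM]; lra.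
Qed.

Lemma threshold_halfspace (R : realType) n (f : boolfun n) :
  (0 < n)%N -> is_threshold R f -> exists v s, v != 0 /\
    forall a, if f a then s < dot (embed R a) v else dot (embed R a) v < s.
Proof.
move=> n_gt0 [w [t f_th]].
have [/existsP[i w_i] | /existsPn w0] := boolP [exists i, w i != 0].
  have [s s_th] := strict_threshold (fun a : cube n => dot (embed R a) (\row_i w i)) t.
  exists (\row_i w i), s; split.
    by apply: contra w_i => /eqP/matrixP/(_ 0 i); rewrite !mxE => ->.
  move=> a; rewrite f_th (_ : \sum_i _ = dot (embed R a) (\row_i w i)) ?s_th //.
  by apply: eq_bigr => j _; rewrite !mxE mulrC.
pose i0 := Ordinal n_gt0.
exists (delta_mx 0 i0), (if t <= 0 then -1 else 2); split.
  by apply/eqP => /matrixP/(_ 0 i0)/eqP; rewrite !mxE !eqxx oner_eq0.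
move=> a; have -> : dot (embed R a) (delta_mx 0 i0) = (a i0)%:R.
  rewrite /dot (bigD1 i0) //= big1 => [|j j_i0]; rewrite !mxE ?eqxx ?(negbTE j_i0).
    by rewrite mulr1 addr0.
  by rewrite mulr0.
rewrite f_th big1 => [|j _]; last by move/negPn/eqP: (w0 j) ->; rewrite mul0r.
by case: (t <= 0); case: (a i0); rewrite /= ?mulr0n ?mulr1n; lra.
Qed.

Lemma threshold_NN_eq (R : realType) n (f : boolfun n) :
  (0 < n)%N -> is_threshold R f -> NN_eq R f 2.
Proof.
move=> n_gt0 /(threshold_halfspace n_gt0) [v [s [v_neq0 f_half]]].
split; last by move=> P N; apply: nn_rep_size_ge2.
by eexists _, _; split; first exact: halfspace_nn_rep v_neq0 f_half.
Qed.

Section BooleanRepresentation.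

Variables (R : realType) (n : nat).

Definition cube_of_point (x : point R n) : cube n := [ffun i => x 0 i == 1].

Lemma embedK : cancel (@embed R n) cube_of_point.
Proof. by move=> a; apply/ffunP => i; rewrite !ffunE mxE pnatr_eq1; case: (a i). Qed.

Lemma bnn_rep_of_ham_rep (f : boolfun n) (P N : seq (cube n)) :
  uniq P -> uniq N -> P != [::] -> N != [::] -> (forall p, p \in P -> p \notin N) ->
  ham_rep f P N -> is_bnn_rep f (map (@embed R n) P) (map (@embed R n) N).
Proof.
move=> uP uN P0 N0 disj rep; split; last first.
  by move=> x; rewrite -map_cat => /mapP[a _ ->]; exists a.
split.
- by rewrite !(map_inj_uniq (@embed_inj R n)) uP uN.
- by case: P P0 {uP disj rep}.
- by case: N N0 {uN disj rep}.
- by move=> _ /mapP[a aP ->]; rewrite (mem_map (@embed_inj R n)) disj.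
move=> a; have := rep a; case: (f a) => -[b [bA near_b]]; exists (embed R b); rewrite ?map_f //;
  by move=> _ /mapP[c cB ->]; rewrite dist_embed_lt near_b.
Qed.

Lemma ham_rep_of_bnn_rep (f : boolfun n) (P N : seq (point R n)) :
  is_bnn_rep f P N -> ham_rep f (map cube_of_point P) (map cube_of_point N).
Proof.
move=> [[_ _ _ _ rep] on_cube] a.
have embedE x : x \in P ++ N -> embed R (cube_of_point x) = x.
  by move=> /on_cube[b ->]; rewrite embedK.
have := rep a; case: (f a) => -[b bA near_b]; exists (cube_of_point b);
  split=> [|_ /mapP[c cB ->]]; rewrite ?map_f // -(dist_embed_lt R) !embedE ?near_b //;
  by rewrite mem_cat ?bA ?cB ?orbT.
Qed.

End BooleanRepresentation.

Lemma MAJ_odd_BNN_eq (R : realType) n : odd n -> BNN_eq R (@MAJ n) 2.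
Proof.
move=> n_odd; split; last by move=> P N [rep _]; apply: nn_rep_size_ge2 rep.
have n2 := odd_double_half n; rewrite n_odd -muln2 in n2.
have ones_zeros : ones n != zeros n.
  by apply/eqP => /ffunP/(_ (Ordinal (odd_gt0 n_odd))); rewrite !ffunE.
exists [:: embed R (ones n)], [:: embed R (zeros n)]; split=> //.
apply: (@bnn_rep_of_ham_rep R n _ [:: ones n] [:: zeros n]) => // [p | a].
  by rewrite !inE => /eqP ->.
rewrite /MAJ -/(wt a); have := ham_ones a; have := ham_zeros a.
case: ifP => maj; [exists (ones n) | exists (zeros n)];
  by split=> [|_ /[1!inE] /eqP ->]; [exact: mem_head | lia].
Qed.

Lemma MAJ_even_ham_rep n (le_mn : ((n./2).+1 <= n)%N) : ~~ odd n ->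
  ham_rep (@MAJ n) (allbut_prefix le_mn) [:: zeros n].
Proof.
move=> n_even a; have n2 := odd_double_half n; rewrite (negbTE n_even) add0n -muln2 in n2.
rewrite /MAJ -/(wt a); case: ifP => maj; last first.
  exists (zeros n); split=> [|_ /mapP[j _ ->]]; rewrite ?mem_head // ham_zeros.
  by have := ham_allbut a (widen_ord le_mn j); lia.
have [/existsP[j /andP[jm aj0]] | /existsPn prefix] :=
  boolP [exists j : 'I_n, (j < (n./2).+1)%N && ~~ a j].
  exists (allbut j); split=> [|_ /[1!inE] /eqP ->]; first exact: mem_allbut_prefix.
  by rewrite ham_zeros; have := ham_allbut a j; rewrite (negbTE aj0); lia.
pose j0 := widen_ord le_mn ord0.
have aj0 : a j0 by have /nandP[|/negPn] // := prefix j0.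
have wa : ((n./2).+1 <= wt a)%N.
  by apply: wt_prefix_le => // j jm; have := prefix j; rewrite jm negbK.
exists (allbut j0); split=> [|_ /[1!inE] /eqP ->]; first exact: mem_allbut_prefix.
by rewrite ham_zeros; have := ham_allbut a j0; rewrite aj0; lia.
Qed.

Lemma MAJ_even_BNN_le (R : realType) n :
  (0 < n)%N -> ~~ odd n -> BNN_le R (@MAJ n) (n./2 + 2).
Proof.
move=> n_gt0 n_even; have n2 := odd_double_half n.
rewrite (negbTE n_even) add0n -muln2 in n2.
have le_mn : ((n./2).+1 <= n)%N by lia.
exists (map (@embed R n) (allbut_prefix le_mn)), (map (@embed R n) [:: zeros n]).
split; last by rewrite /rep_size size_map size_allbut_prefix addn1 addn2.
apply: bnn_rep_of_ham_rep => //; last exact: MAJ_even_ham_rep.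
- exact: allbut_prefix_uniq.
- by rewrite -size_eq0 size_allbut_prefix.
- by move=> _ /mapP[j _ ->]; rewrite inE allbut_neq_zeros //; lia.
Qed.

Lemma bnn_TH_third_size_ge (R : realType) n (P N : seq (point R n)) :
  (3 <= n)%N -> is_bnn_rep (@TH n (n %/ 3)) P N -> (2 ^ (n %/ 3 %/ 2) <= size P)%N.
Proof.
move=> n_ge3 /ham_rep_of_bnn_rep rep.
apply: leq_trans (expn_half_le_card rep _ _) _; try lia.
by apply: leq_trans (card_size _) _; rewrite size_map.
Qed.

Lemma powR2_le_expn (R : realType) (x : R) j : x <= j%:R -> 2 `^ x <= (2 ^ j)%:R.
Proof.
by move=> le_xj; rewrite natrX -powR_mulrn ?ler0n //; apply: ler_powR; rewrite ?ler1n.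
Qed.

Theorem theorem2 (R : realType) :
  (* (a) *)
  (forall (n : nat) (f : boolfun n), (0 < n)%N -> is_threshold R f -> NN_eq R f 2)
  /\
  (* (b) *)
  ((forall n : nat, odd n -> BNN_eq R (@MAJ n) 2) /\
   (forall n : nat, (0 < n)%N -> ~~ odd n -> BNN_le R (@MAJ n) (n./2 + 2)))
  /\
  (* (c) BNN(TH_n^{floor(n/3)}) = 2^{Omega(n)} *)
  (exists c : R, 0 < c /\
     exists n0 : nat, forall n : nat, (n0 <= n)%N ->
       forall P N : seq (point R n), is_bnn_rep (@TH n (n %/ 3)) P N ->
         (2 : R) `^ (c * n%:R) <= (rep_size P N)%:R).
Proof.
split; first by move=> n f; apply: threshold_NN_eq.
split; first by split; [apply: MAJ_odd_BNN_eq | apply: MAJ_even_BNN_le].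
exists 12%:R^-1; split; first by rewrite invr_gt0 ltr0n.
exists 12%N => n n_ge12 P N rep.
apply: (@le_trans _ _ (2 ^ (n %/ 3 %/ 2))%:R).
  by apply: powR2_le_expn; rewrite mulrC ler_pdivrMr ?ltr0n // -natrM ler_nat; lia.
rewrite ler_nat /rep_size; apply: leq_trans (leq_addr _ _).
by apply: bnn_TH_third_size_ge rep; lia.
Qed.
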